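(* Let $S\subseteq\mathbb{M}^\Sigma$ be a masked semilinear set. Then there exists a deterministic automaton $\mathcal{A}$ over $\Sigma$ such that $\Psi(\mathfrak{J}(\mathcal{A}))=S$.
   Context: An automaton is $\mathcal{A}=\langle\Sigma,Q,\delta,Q_0,\alpha\rangle$ with B\''uchi acceptance (a run is accepting if it visits $\alpha$ infinitely often); it is deterministic if $|Q_0|=1$ and $|\delta(q,\sigma)|=1$ for all $q,\sigma$. For $w\in\Sigma^\omega$, $\Psi(w)\in\mathbb{N}_\infty^\Sigma$ gives for each letter its number of occurrences (or $\infty$); $w\sim w'$ iff $\Psi(w)=\Psi(w')$; $\mathfrak{J}(\mathcal{A})=\{w\in\Sigma^\omega:\exists w'\sim w,\ w'\in\mathfrak{L}(\mathcal{A})\}$. $\mathbb{M}^\Sigma=\mathbb{N}_\infty^\Sigma\setminus\mathbb{N}^\Sigma$. A mask is $\mathfrak{m}\in\{0,\infty\}^\Sigma\setminus\{\vec 0\}$; $\vec x\oplus\mathfrak{m}$ has coordinate $\vec x(\sigma)$ where $\mathfrak{m}(\sigma)=0$ and $\infty$ elsewhere. A masked semilinear set is $\bigcup_{\mathfrak{m}}\{\vec x\oplus\mathfrak{m}:\vec x\in S_\mathfrak{m}\}$ over all masks, with each $S_\mathfrak{m}\subseteq\mathbb{N}^\Sigma$ semilinear (possibly empty). *)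

From mathcomp Require Import all_boot.
Unset Strict Implicit. Unset Printing Implicit Defensive.

Definition oword (Sigma : Type) := nat -> Sigma.

(* Büchi automaton <Sigma, Q, delta, Q0, alpha> with a finite state set *)
Record automaton (Sigma : finType) := Automaton {
  state : finType;
  delta : state -> Sigma -> {set state};
  init  : {set state};
  acc   : {set state} }.
Arguments state {Sigma}.
Arguments delta {Sigma}.
Arguments init {Sigma}.
Arguments acc {Sigma}.

Definition deterministic {Sigma : finType} (A : automaton Sigma) : Prop :=
  #|init A| = 1 /\ forall q s, #|delta A q s| = 1.

Definition run {Sigma : finType} (A : automaton Sigma) (w : oword Sigma)
  (r : nat -> state A) : Prop :=
  r 0 \in init A /\ forall n, r n.+1 \in delta A (r n) (w n).

Definition accepting_run {Sigma : finType} (A : automaton Sigma) (w : oword Sigma)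
  (r : nat -> state A) : Prop :=
  run A w r /\ forall N, exists n, N <= n /\ r n \in acc A.

Definition lang {Sigma : finType} (A : automaton Sigma) (w : oword Sigma) : Prop :=
  exists r, accepting_run A w r.

(* extended naturals N_inf : Some k = k, None = infinity *)
Definition ninf := option nat.

Definition cnt {Sigma : finType} (w : oword Sigma) (a : Sigma) (n : nat) : nat :=
  \sum_(i < n) (w i == a).

Definition parikh {Sigma : finType} (w : oword Sigma) (v : {ffun Sigma -> ninf}) : Prop :=
  forall a, match v a with
            | Some k => exists N, forall n, N <= n -> cnt w a n = k
            | None => forall k, exists n, k <= cnt w a n
            end.

Definition parikh_equiv {Sigma : finType} (w w' : oword Sigma) : Prop :=
  exists v, parikh w v /\ parikh w' v.

Definition Jclosure {Sigma : finType} (A : automaton Sigma) (w : oword Sigma) : Prop :=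
  exists w', parikh_equiv w w' /\ lang A w'.

Definition linear_set {Sigma : finType} (b : {ffun Sigma -> nat})
  (P : seq {ffun Sigma -> nat}) (x : {ffun Sigma -> nat}) : Prop :=
  exists lam : nat -> nat,
    forall a, x a = b a + \sum_(i < size P) lam i * (nth b P i) a.

Definition semilinear {Sigma : finType} (S : {ffun Sigma -> nat} -> Prop) : Prop :=
  exists L : seq ({ffun Sigma -> nat} * seq {ffun Sigma -> nat}),
    forall x, S x <-> exists2 bP, bP \in L & linear_set bP.1 bP.2 x.

Definition is_mask {Sigma : finType} (m : {ffun Sigma -> ninf}) : Prop :=
  (forall a, m a = Some 0 \/ m a = None) /\ exists a, m a = None.

Definition mask_add {Sigma : finType} (x : {ffun Sigma -> nat}) (m : {ffun Sigma -> ninf})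
  : {ffun Sigma -> ninf} :=
  [ffun a => if m a is Some 0 then Some (x a) else None].

Definition masked_semilinear {Sigma : finType} (S : {ffun Sigma -> ninf} -> Prop) : Prop :=
  exists Sm : {ffun Sigma -> ninf} -> {ffun Sigma -> nat} -> Prop,
    (forall m, is_mask m -> semilinear (Sm m)) /\
    forall v, S v <-> exists m, is_mask m /\ exists2 x, Sm m x & v = mask_add x m.

From mathcomp Require Import all_boot.
From Stdlib Require Import Classical.
Set Implicit Arguments. Unset Strict Implicit. Unset Printing Implicit Defensive.

(* A masked semilinear set S is a finite union of sets { x (+) M | x in L }
   with M a nonempty set of letters (the infinite coordinates) and L a
   linear set b + N p_1 + ... + N p_k.  Each such "component" is realised by
   the omega-words  u E E E ...  where E enumerates M and u is a word over
   the other letters whose Parikh vector lies in L (erased on M).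

   For every component we build a nondeterministic automaton that reads
   u letter by letter with a bounded counter of the letters still owed to
   the current summand (b, then some p_i), switches deterministically at
   the first letter of M, and afterwards checks that the word is E E E ...
   The disjoint union of these automata is determinized by the subset
   construction, accepting when some cycling state is current.  Since the
   switching time of a component is forced, infinitely many cycling
   prefixes of one component pin down the whole word (aut_sound), and
   conversely each u E E E ... is accepted (aut_complete).  Hence
   Psi(L(A)) = S, and Psi(J(A)) = Psi(L(A)) because J(A) only closes L(A)
   under Parikh equivalence. *)

Section Counting.
Variables (Sigma : finType) (w : oword Sigma).

Lemma cntS a n : cnt w a n.+1 = cnt w a n + (w n == a).
Proof. by rewrite /cnt big_ord_recr. Qed.

Lemma cnt_mono a m n : m <= n -> cnt w a m <= cnt w a n.
Proof.
elim: n => [|n IH]; first by rewrite leqn0 => /eqP->.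
rewrite leq_eqVlt => /orP[/eqP->//|/IH Hmn].
by rewrite cntS (leq_trans Hmn (leq_addr _ _)).
Qed.

Lemma cnt_mkseq a n : cnt w a n = count_mem a (mkseq w n).
Proof.
elim: n => [|n IH]; first by rewrite /cnt big_ord0.
by rewrite cntS mkseqS -cats1 count_cat IH /= eq_sym addn0.
Qed.

Lemma cnt_frozen a e n :
  (forall m, e <= m -> w m != a) -> e <= n -> cnt w a n = cnt w a e.
Proof.
move=> Hnot; elim: n => [|n IH]; first by rewrite leqn0 => /eqP->.
rewrite leq_eqVlt => /orP[/eqP->//|Hn].
by rewrite cntS (negbTE (Hnot n Hn)) addn0 IH.
Qed.

Lemma cnt_unbounded a :
  (forall N, exists2 n, N <= n & w n = a) -> forall k, exists n, k <= cnt w a n.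
Proof.
move=> Hinf; elim=> [|k [n Hn]]; first by exists 0.
have [m Hm Hw] := Hinf n; exists m.+1.
by rewrite cntS Hw eqxx addn1 ltnS (leq_trans Hn) ?cnt_mono.
Qed.

Lemma parikh_uniq v v' : parikh w v -> parikh w v' -> v = v'.
Proof.
have finite_unbounded a k : (exists N, forall n, N <= n -> cnt w a n = k) ->
    ~ forall k, exists n, k <= cnt w a n.
  move=> [N HN] /(_ k.+1) [n Hn].
  have := cnt_mono a (leq_maxr N n); rewrite (HN _ (leq_maxl N n)).
  by move/(leq_trans Hn); rewrite ltnn.
move=> H H'; apply/ffunP => a; move: (H a) (H' a).
case: (v a) => [k|]; case: (v' a) => [k'|] //.
- move=> [N HN] [N' HN'].
  by rewrite -(HN (maxn N N')) ?leq_maxl // -(HN' (maxn N N')) ?leq_maxr.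
- by move=> h h'; case: (finite_unbounded _ _ h h').
- by move=> h h'; case: (finite_unbounded _ _ h' h).
Qed.

End Counting.

Lemma inf_pigeonhole (T : finType) (P : T -> nat -> Prop) :
  (forall N, exists2 n, N <= n & exists g, P g n) ->
  exists g, forall N, exists2 n, N <= n & P g n.
Proof.
move=> Hinf; apply: NNPP => Hnone.
have Hbound g : exists N, forall n, N <= n -> ~ P g n.
  apply: NNPP => Hg; apply: Hnone; exists g => N; apply: NNPP => HN.
  by apply: Hg; exists N => n Hn Pn; apply: HN; exists n.
have [Nf HNf] := fin_all_exists Hbound.
have [n Hn [g Pg]] := Hinf (\max_g Nf g).
exact: HNf g n (leq_trans (leq_bigmax g) Hn) Pg.
Qed.

Section MaskedParikh.
Variable Sigma : finType.
Implicit Types (M : {set Sigma}) (x y : {ffun Sigma -> nat}) (w : oword Sigma).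

Definition maskof M : {ffun Sigma -> ninf} :=
  [ffun a => if a \in M then None else Some 0].

Lemma mask_addE x M a :
  mask_add x (maskof M) a = if a \in M then None else Some (x a).
Proof. by rewrite !ffunE; case: (a \in M). Qed.

Lemma is_maskP m : is_mask m <-> exists2 M, M != set0 & m = maskof M.
Proof.
split=> [[Hm [a Ha]]|[M /set0Pn[a Ha] ->]].
  exists [set a | m a == None]; first by apply/set0Pn; exists a; rewrite inE Ha.
  by apply/ffunP => b; rewrite !ffunE inE; case: (Hm b) => ->.
split; last by exists a; rewrite ffunE Ha.
by move=> b; rewrite ffunE; case: (b \in M); [right|left].
Qed.

Definition erase M y : {ffun Sigma -> nat} := [ffun c => if c \in M then 0 else y c].

Lemma erase_le M y c : erase M y c <= y c.
Proof. by rewrite ffunE; case: ifP. Qed.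

Definition word_of y : seq Sigma := flatten [seq nseq (y c) c | c <- enum Sigma].

Lemma count_word_of y a : count_mem a (word_of y) = y a.
Proof.
rewrite /word_of count_flatten -map_comp sumnE big_map big_enum /=.
rewrite (bigD1 a) //= count_nseq /= eqxx mul1n big1 ?addn0 // => c /negbTE.
by rewrite count_nseq /= eq_sym => ->.
Qed.

Lemma mem_word_of_erase M y a : a \in word_of (erase M y) -> a \notin M.
Proof.
rewrite -has_pred1 has_count count_word_of ffunE.
by case: (a \in M).
Qed.

Lemma parikh_masked w M e x :
  (forall m, e <= m -> w m \in M) ->
  (forall a, a \in M -> forall N, exists2 m, N <= m & w m = a) ->
  (forall c, c \notin M -> cnt w c e = x c) ->
  parikh w (mask_add x (maskof M)).
Proof.
move=> HinM Hinf Hpre a; rewrite mask_addE.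
case: (boolP (a \in M)) => Ha; first exact: cnt_unbounded (Hinf a Ha).
exists e => n Hn; rewrite -Hpre // (cnt_frozen _ Hn) // => m /HinM.
by apply: contraTneq => ->.
Qed.

Lemma nth_enum_mod M a m : M != set0 -> nth a (enum M) (m %% #|M|) \in M.
Proof. by rewrite -card_gt0 -mem_enum => Mpos; rewrite mem_nth // -cardE ltn_pmod. Qed.

Lemma parikh_cyclic w M e x :
  M != set0 ->
  (forall m, e <= m -> w m = nth (w m) (enum M) ((m - e) %% #|M|)) ->
  (forall c, c \notin M -> cnt w c e = x c) ->
  parikh w (mask_add x (maskof M)).
Proof.
move=> Mne Hper; apply: parikh_masked => [m Hm|a Ha N]; first by rewrite Hper ?nth_enum_mod.
have Mpos : 0 < #|M| by rewrite card_gt0.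
have Hidx : index a (enum M) < #|M| by rewrite cardE index_mem mem_enum.
exists (e + (N * #|M| + index a (enum M))).
  by rewrite addnCA (leq_trans (leq_pmulr N Mpos)) ?leq_addr.
by rewrite Hper ?leq_addr // addKn modnMDl modn_small // nth_index ?mem_enum.
Qed.

Definition lasso (a0 : Sigma) (u E : seq Sigma) : oword Sigma :=
  fun n => if n < size u then nth a0 u n else nth a0 E ((n - size u) %% size E).

Lemma mkseq_lasso a0 u E : mkseq (lasso a0 u E) (size u) = u.
Proof.
apply: (eq_from_nth (x0 := a0)); rewrite size_mkseq // => i Hi.
by rewrite nth_mkseq // /lasso Hi.
Qed.

Lemma lasso_suffix a0 u E m :
  size u <= m -> lasso a0 u E m = nth a0 E ((m - size u) %% size E).
Proof. by rewrite /lasso ltnNge => ->. Qed.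

End MaskedParikh.

Lemma Jclosure_parikh (Sigma : finType) (A : automaton Sigma) v :
  (exists w, Jclosure A w /\ parikh w v) <-> exists w, lang A w /\ parikh w v.
Proof.
split=> [[w [[w' [[v' [Hwv' Hw'v']] HL]] Hwv]]|[w [HL Hwv]]].
  by exists w'; split; rewrite // (parikh_uniq Hwv Hwv').
by exists w; split=> //; exists w; split=> //; exists v.
Qed.

Section PowersetAutomaton.
Variables (Sigma Q : finType) (step : Q -> Sigma -> Q -> bool) (I F : {set Q}).

Fixpoint reads (q : Q) (s : seq Sigma) (q' : Q) : Prop :=
  if s is a :: s' then exists2 q1, step q a q1 & reads q1 s' q' else q = q'.

Lemma reads_cat q s1 s2 q' :
  reads q (s1 ++ s2) q' <-> exists2 q1, reads q s1 q1 & reads q1 s2 q'.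
Proof.
elim: s1 q => [|a s1 IH] q /=; first by split=> [H|[_ <-]] //; exists q.
split=> [[q1 Hs /IH[q2 H1 H2]]|[q2 [q1 Hs H1] H2]].
  by exists q2 => //; exists q1.
by exists q1 => //; apply/IH; exists q2.
Qed.

Definition reachable (s : seq Sigma) (q : Q) := exists2 q0, q0 \in I & reads q0 s q.

Lemma reachable_nil q : reachable [::] q <-> q \in I.
Proof. by split=> [[q0 Hq0 <-]|Hq] //; exists q. Qed.

Lemma reachable_rcons s a q :
  reachable (rcons s a) q <-> exists2 q1, reachable s q1 & step q1 a q.
Proof.
rewrite /reachable -cats1; split=> [[q0 Hq0 /reads_cat[q1 H1 [q2 H2 <-]]]|].
  by exists q1 => //; exists q0.
by move=> [q1 [q0 Hq0 H1] H2]; exists q0 => //; apply/reads_cat; exists q1 => //; exists q.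
Qed.

Lemma reachable_cat s1 s2 q1 q :
  reachable s1 q1 -> reads q1 s2 q -> reachable (s1 ++ s2) q.
Proof. by move=> [q0 Hq0 H1] H2; exists q0 => //; apply/reads_cat; exists q1. Qed.

Lemma reads_loop q ss : (forall s, s \in ss -> reads q s q) -> reads q (flatten ss) q.
Proof.
elim: ss => [|s ss IH] Hss //=; apply/reads_cat; exists q; first exact/Hss/mem_head.
by apply: IH => s' Hs'; apply: Hss; rewrite in_cons Hs' orbT.
Qed.

Definition post (X : {set Q}) (a : Sigma) : {set Q} :=
  [set q' | [exists q in X, step q a q']].

Definition powerset_aut : automaton Sigma :=
  @Automaton Sigma {set Q} (fun X a => [set post X a]) [set I]
             [set X : {set Q} | [exists q in F, q \in X]].

Lemma powerset_det : deterministic powerset_aut.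
Proof. by split=> [|X a]; rewrite cards1. Qed.

Lemma foldl_post s q : q \in foldl post I s <-> reachable s q.
Proof.
elim/last_ind: s q => [|s a IH] q; first by rewrite reachable_nil.
rewrite foldl_rcons reachable_rcons inE; split.
  by move=> /existsP[q1 /andP[/IH H1 H2]]; exists q1.
by move=> [q1 /IH H1 H2]; apply/existsP; exists q1; rewrite H1.
Qed.

Lemma powerset_lang w : lang powerset_aut w <->
  forall N, exists2 n, N <= n & exists2 q, q \in F & reachable (mkseq w n) q.
Proof.
have runE r : run powerset_aut w r -> forall t, r t = foldl post I (mkseq w t).
  move=> [H0 HS]; elim=> [|t IH]; first by move: H0; rewrite inE => /eqP.
  by move: (HS t); rewrite inE IH mkseqS foldl_rcons => /eqP.
split=> [[r [Hrun Hacc]] N|Hinf].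
  have [n [Hn]] := Hacc N; rewrite inE runE // => /existsP[q /andP[Hq /foldl_post]].
  by exists n => //; exists q.
exists (fun t => foldl post I (mkseq w t)); split.
  by split=> [|n]; rewrite ?mkseqS ?foldl_rcons inE.
move=> N; have [n Hn [q Hq /foldl_post Hr]] := Hinf N; exists n; split=> //.
by rewrite inE; apply/existsP; exists q; rewrite Hq.
Qed.

End PowersetAutomaton.

Section Construction.
Variable Sigma : finType.

Definition component := ({set Sigma} * ({ffun Sigma -> nat} * seq {ffun Sigma -> nat}))%type.

Definition comp_image (t : component) (v : {ffun Sigma -> ninf}) :=
  exists2 x, linear_set t.2.1 t.2.2 x & v = mask_add x (maskof t.1).

Variable comps : seq component.
Hypothesis comps_mask : forall t, t \in comps -> t.1 != set0.

Implicit Type g : seq_sub comps.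

Definition cmask g := (ssval g).1.
Definition nper g := size (ssval g).2.2.
Definition base g := erase (cmask g) (ssval g).2.1.
Definition period g i := erase (cmask g) (nth (ssval g).2.1 (ssval g).2.2 i).

Definition lin g (lam : nat -> nat) : {ffun Sigma -> nat} :=
  [ffun c => (ssval g).2.1 c + \sum_(i < nper g) lam i * nth (ssval g).2.1 (ssval g).2.2 i c].

Lemma lin_linear g lam : linear_set (ssval g).2.1 (ssval g).2.2 (lin g lam).
Proof. by exists lam => a; rewrite ffunE. Qed.

Lemma lin_erase g lam c : c \notin cmask g ->
  lin g lam c = base g c + \sum_(i < nper g) lam i * period g i c.
Proof.
move=> Hc; rewrite !ffunE (negbTE Hc); congr (_ + _).
by apply: eq_bigr => i _; rewrite ffunE (negbTE Hc).
Qed.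

Definition spanned g (x : Sigma -> nat) :=
  exists lam : nat -> nat, forall c, x c = base g c + \sum_(i < nper g) lam i * period g i c.

Lemma spanned_period g (i : 'I_(nper g)) (x y : Sigma -> nat) :
  spanned g x -> (forall c, y c = x c + period g i c) -> spanned g y.
Proof.
move=> [lam Hx] Hy; exists (fun j => lam j + (j == i :> nat)) => c.
rewrite Hy Hx -addnA; congr (_ + _).
under [in RHS]eq_bigr => j _ do rewrite mulnDl.
rewrite big_split /=; congr (_ + _).
rewrite (bigD1 i) //= eqxx mul1n big1 ?addn0 // => j /negbTE Hj.
by move: Hj; rewrite -val_eqE /= => ->.
Qed.

Definition bound := \max_(v <- flatten [seq t.2.1 :: t.2.2 | t <- comps]) \max_c v c.

Lemma bound_vec g v c : v \in (ssval g).2.1 :: (ssval g).2.2 -> v c <= bound.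
Proof.
move=> Hv; apply: leq_trans (leq_bigmax c) _.
apply: (leq_bigmax_seq (P := xpredT) (F := fun v : {ffun Sigma -> nat} => \max_c v c)) => //.
by apply/flatten_mapP; exists (ssval g); first exact: ssvalP.
Qed.

Lemma base_bound g c : base g c <= bound.
Proof. by rewrite (leq_trans (erase_le _ _ _)) // (bound_vec (g := g)) ?mem_head. Qed.

Lemma period_bound g (i : 'I_(nper g)) c : period g i c <= bound.
Proof.
by rewrite (leq_trans (erase_le _ _ _)) // (bound_vec (g := g)) // in_cons mem_nth ?orbT.
Qed.

Definition counter := {ffun Sigma -> 'I_bound.+1}.
Definition counter_of (y : Sigma -> nat) : counter := [ffun c => inord (y c)].
Definition empty (d : counter) := [forall c, d c == 0 :> nat].
Definition zero := counter_of (fun _ => 0).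

Lemma counter_ofE y c : y c <= bound -> counter_of y c = y c :> nat.
Proof. by move=> Hy; rewrite ffunE inordK. Qed.

Lemma counter_eq (d : counter) y : (forall c, d c = y c :> nat) -> d = counter_of y.
Proof.
move=> Hd; apply/ffunP => c; apply/val_inj => /=.
by rewrite counter_ofE -Hd // -ltnS ltn_ord.
Qed.

Lemma empty_zero : empty zero.
Proof. by apply/forallP => c; rewrite counter_ofE. Qed.

Lemma emptyP d : empty d -> forall c, d c = 0 :> nat.
Proof. by move=> /forallP H c; apply/eqP. Qed.

(* Each component is run by a nondeterministic automaton with two modes.
   In counting mode it reads letters outside the mask, the counter d
   holding the letters still owed to the current summand (b at first);
   an empty counter may open a new period vector.  On the first letter
   of the mask it switches to cycling mode, where it must read the
   enumeration of the mask over and over, the phase j being the position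
   of the next letter. *)
Definition mode := (counter + 'I_#|Sigma|.+1)%type.

Definition cycle_step g (j : nat) (a : Sigma) (j' : nat) :=
  (a == nth a (enum (cmask g)) j) && (j' == j.+1 %% #|cmask g|).

Definition mode_step g (m : mode) (a : Sigma) (m' : mode) : bool :=
  match m, m' with
  | inl d, inl d' => (a \notin cmask g) &&
      ((0 < d a) && [forall c, d' c == d c - (c == a) :> nat]
       || empty d && [exists i : 'I_(nper g), [forall c, d' c + (c == a) == period g i c]])
  | inl d, inr j' => empty d && cycle_step g 0 a j'
  | inr j, inr j' => cycle_step g j a j'
  | inr _, inl _ => false
  end.

Definition state := (seq_sub comps * mode)%type.

Definition step (q : state) (a : Sigma) (q' : state) :=
  (q'.1 == q.1) && mode_step q.1 q.2 a q'.2.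

Definition start : {set state} := [set q | q.2 == inl (counter_of (base q.1))].
Definition cycling : {set state} := [set q | if q.2 is inr _ then true else false].

Definition aut := powerset_aut step start cycling.

Lemma count_inv w n g d :
  reachable step start (mkseq w n) (g, inl d) ->
  spanned g (fun c => cnt w c n + d c) /\ forall m, m < n -> w m \notin cmask g.
Proof.
elim: n g d => [|n IH] g d.
  move/reachable_nil; rewrite inE /= => /eqP [->]; split=> //.
  exists (fun _ => 0) => c; rewrite /cnt big_ord0 counter_ofE ?base_bound //.
  by rewrite big1 ?addn0 // => i _; rewrite mul0n.
rewrite mkseqS => /reachable_rcons [[g1 [d1|j1]] Hr /andP[/eqP /= -> Hstep]] //.
have [[lam Hlam] Hno] := IH _ _ Hr.
case/andP: Hstep => Hnot Hchoice; split; last first.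
  by move=> m; rewrite ltnS leq_eqVlt => /orP[/eqP->|/Hno].
case/orP: Hchoice => [/andP[Hpos /forallP Hd]|/andP[/emptyP H0 /existsP[i /forallP Hd]]].
  exists lam => c; rewrite -Hlam cntS (eqP (Hd c)) -addnA; congr (_ + _).
  case: (eqVneq c (w n)) => [->|_] /=; last by rewrite add0n subn0.
  by rewrite add1n subn1 prednK.
apply: (spanned_period (i := i) (x := fun c => cnt w c n + d1 c)); first by exists lam.
by move=> c; rewrite H0 addn0 cntS -(eqP (Hd c)) eq_sym -addnA (addnC (c == w n)).
Qed.

Lemma cycle_inv w n g j :
  reachable step start (mkseq w n) (g, inr j) ->
  exists e, [/\ e < n, forall m, m < e -> w m \notin cmask g, spanned g (cnt w ^~ e),
    forall m, e <= m < n -> w m = nth (w m) (enum (cmask g)) ((m - e) %% #|cmask g|)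
    & j = (n - e) %% #|cmask g| :> nat].
Proof.
elim: n g j => [|n IH] g j; first by move/reachable_nil; rewrite inE.
rewrite mkseqS => /reachable_rcons [[g1 [d1|j1]] Hr /andP[/eqP /= -> Hstep]].
  move: Hstep => /andP[/emptyP H0 /andP[/eqP Hw /eqP ->]].
  have [[lam Hlam] Hno] := count_inv Hr.
  exists n; split; [exact: ltnSn | exact: Hno | | | by rewrite subSnn].
    by exists lam => c; rewrite -Hlam H0 addn0.
  move=> m /andP[H1 H2]; have -> : m = n by apply/eqP; rewrite eqn_leq H1 -ltnS H2.
  by rewrite subnn mod0n; exact: Hw.
move: Hstep => /andP[/eqP Hw /eqP ->].
have [e [He Hno Hspan Hper Hj1]] := IH _ _ Hr.
exists e; split; [exact: ltnW | exact: Hno | exact: Hspan | |].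
  move=> m /andP[H1]; rewrite ltnS leq_eqVlt => /orP[/eqP->|H2]; first by rewrite -Hj1; exact: Hw.
  by apply: Hper; rewrite H1.
by rewrite Hj1 (subSn (ltnW He)) -addn1 modnDml addn1.
Qed.

Lemma eventually_cyclic w g :
  (forall N, exists2 n, N <= n & exists j, reachable step start (mkseq w n) (g, inr j)) ->
  exists e, spanned g (cnt w ^~ e) /\
    forall m, e <= m -> w m = nth (w m) (enum (cmask g)) ((m - e) %% #|cmask g|).
Proof.
move=> Hg; have Mne := comps_mask (ssvalP g).
have switch_in e n : e < n ->
    (forall m, e <= m < n -> w m = nth (w m) (enum (cmask g)) ((m - e) %% #|cmask g|)) ->
    w e \in cmask g.
  by move=> He Hper; rewrite (Hper e); [exact: nth_enum_mod | rewrite leqnn He].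
have [n0 _ [j0 /cycle_inv [e [He Hno Hspan Hper _]]]] := Hg 0.
have periodic n j : reachable step start (mkseq w n) (g, inr j) ->
    forall m, e <= m < n -> w m = nth (w m) (enum (cmask g)) ((m - e) %% #|cmask g|).
  move=> /cycle_inv [e' [He' Hno' _ Hper' _]].
  case: (ltngtP e e') => [lt|gt|eq].
  - by move: (Hno' e lt); rewrite (switch_in _ _ He Hper).
  - by move: (Hno e' gt); rewrite (switch_in _ _ He' Hper').
  - by rewrite eq; exact: Hper'.
exists e; split=> [//|m Hm].
have [n Hn [j Hr]] := Hg m.+1.
by apply: (periodic n j Hr); rewrite Hm; exact: Hn.
Qed.

Lemma aut_sound w : lang aut w ->
  exists g, exists2 x, linear_set (ssval g).2.1 (ssval g).2.2 x &
    parikh w (mask_add x (maskof (cmask g))).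
Proof.
move/powerset_lang => Hacc.
have [g Hg] : exists g, forall N,
    exists2 n, N <= n & exists j, reachable step start (mkseq w n) (g, inr j).
  apply: (inf_pigeonhole (P := fun g n => exists j, reachable step start (mkseq w n) (g, inr j))).
  move=> N; have [n Hn [[g [d|j]] Hq Hr]] := Hacc N; first by rewrite inE in Hq.
  by exists n => //; exists g, j.
have [e [[lam Hlam] Hper]] := eventually_cyclic Hg.
exists g, (lin g lam); first exact: lin_linear.
apply: parikh_cyclic Hper _ => [|c Hc]; first exact: comps_mask (ssvalP g).
by rewrite lin_erase // Hlam.
Qed.

Lemma drain g (d : counter) s :
  (forall a, a \in s -> a \notin cmask g) -> (forall c, count_mem c s <= d c) ->
  reads step (g, inl d) s (g, inl (counter_of (fun c => d c - count_mem c s))).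
Proof.
elim: s d => [|a s IH] d Hs Hc /=.
  by congr (_, inl _); apply: counter_eq => c; rewrite subn0.
have Hpos : 0 < d a by apply: leq_trans (Hc a); rewrite /= eqxx.
set d1 := counter_of (fun c => d c - (c == a)).
have Hd1 c : d1 c = d c - (c == a) :> nat.
  by rewrite counter_ofE // (leq_trans (leq_subr _ _)) // -ltnS ltn_ord.
exists (g, inl d1).
  rewrite /step /= eqxx Hs ?mem_head //= Hpos /=; apply/orP; left.
  by apply/forallP => c; rewrite Hd1.
have -> : counter_of (fun c => d c - count_mem c (a :: s)) =
          counter_of (fun c => d1 c - count_mem c s).
  by apply/ffunP => c; rewrite [LHS]ffunE [RHS]ffunE Hd1 /= subnDA eq_sym.
apply: IH => [x Hx|c]; first by apply: Hs; rewrite in_cons Hx orbT.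
have := Hc c; rewrite /= eq_sym => H.
by rewrite Hd1 leq_subRL // (leq_trans (leq_addr _ _) H).
Qed.

Lemma period_loop g (i : 'I_(nper g)) :
  reads step (g, inl zero) (word_of (period g i)) (g, inl zero).
Proof.
set y := period g i.
have Hout a : a \in word_of y -> a \notin cmask g by apply: mem_word_of_erase.
case E: (word_of y) => [|a s] //=.
have Ha : 0 < y a by rewrite -count_word_of E /= eqxx.
set d1 := counter_of (fun c => y c - (c == a)).
have Hd1 c : d1 c = y c - (c == a) :> nat.
  by rewrite counter_ofE // (leq_trans (leq_subr _ _)) ?period_bound.
exists (g, inl d1).
  rewrite /step /= eqxx (Hout a) ?E ?mem_head //= empty_zero /=; apply/orP; right.
  apply/existsP; exists i; apply/forallP => c; rewrite Hd1 subnK //.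
  by case: eqP => [->|].
have Hcs c : count_mem c s = y c - (c == a) by rewrite -count_word_of E /= eq_sym addKn.
have -> : zero = counter_of (fun c => d1 c - count_mem c s).
  by apply/ffunP => c; rewrite [LHS]ffunE [RHS]ffunE Hd1 Hcs subnn.
apply: drain => [x Hx|c]; last by rewrite Hcs Hd1.
by apply: Hout; rewrite E in_cons Hx orbT.
Qed.

Definition prefix_word g (lam : nat -> nat) : seq Sigma :=
  word_of (base g) ++
  flatten [seq flatten (nseq (lam i) (word_of (period g i))) | i <- iota 0 (nper g)].

Lemma count_prefix g lam c :
  count_mem c (prefix_word g lam) = base g c + \sum_(i < nper g) lam i * period g i c.
Proof.
rewrite count_cat count_word_of count_flatten -map_comp sumnE big_map; congr (_ + _).
have -> : iota 0 (nper g) = index_iota 0 (nper g) by rewrite /index_iota subn0.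
rewrite big_mkord; apply: eq_bigr => i _ /=.
by rewrite count_flatten map_nseq sumn_nseq count_word_of mulnC.
Qed.

Lemma reach_prefix g lam : reachable step start (prefix_word g lam) (g, inl zero).
Proof.
apply: (reachable_cat (q1 := (g, inl zero))).
  exists (g, inl (counter_of (base g))); first by rewrite inE.
  have -> : zero = counter_of (fun c => counter_of (base g) c - count_mem c (word_of (base g))).
    apply/ffunP => c; rewrite [LHS]ffunE [RHS]ffunE count_word_of.
    by rewrite counter_ofE ?base_bound // subnn.
  apply: drain => [x /mem_word_of_erase //|c].
  by rewrite count_word_of counter_ofE ?base_bound.
apply: reads_loop => s /mapP [i]; rewrite mem_iota => /andP[_ Hi] ->.
apply: reads_loop => s' /nseqP [-> _]; exact: (period_loop (Ordinal Hi)).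
Qed.

Lemma reach_cycle g lam x0 t :
  let u := prefix_word g lam in
  reachable step start (mkseq (lasso x0 u (enum (cmask g))) (size u + t.+1))
            (g, inr (inord (t.+1 %% #|cmask g|))).
Proof.
move=> u; have Mpos : 0 < #|cmask g| by rewrite card_gt0 comps_mask ?ssvalP.
have Hw m : size u <= m ->
    lasso x0 u (enum (cmask g)) m = nth x0 (enum (cmask g)) ((m - size u) %% #|cmask g|).
  by move=> Hm; rewrite lasso_suffix // cardE.
have Hphase j : (inord (j %% #|cmask g|) : 'I_#|Sigma|.+1) = j %% #|cmask g| :> nat.
  by apply: inordK; rewrite ltnS (leq_trans (ltnW (ltn_pmod j Mpos))) ?max_card.
have Hstep j : cycle_step g (j %% #|cmask g|) (nth x0 (enum (cmask g)) (j %% #|cmask g|))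
                 (j.+1 %% #|cmask g|).
  rewrite /cycle_step -[(_ %% _).+1]addn1 modnDml addn1 eqxx andbT.
  by apply/eqP; apply: set_nth_default; rewrite -cardE; apply: ltn_pmod.
elim: t => [|t IH]; rewrite addnS mkseqS; apply/reachable_rcons.
  exists (g, inl zero); first by rewrite addn0 mkseq_lasso; exact: reach_prefix.
  rewrite /step /= eqxx empty_zero /= Hphase Hw addn0 ?leqnn // subnn.
  by move: (Hstep 0); rewrite !mod0n.
exists (g, inr (inord (t.+1 %% #|cmask g|))); first exact: IH.
rewrite /step /= eqxx /= !Hphase Hw -?addnS ?leq_addr // addKn.
exact: Hstep.
Qed.

Lemma aut_complete g lam :
  exists w, lang aut w /\ parikh w (mask_add (lin g lam) (maskof (cmask g))).
Proof.
have Mne := comps_mask (ssvalP g); have [x0 _] := set0Pn _ Mne.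
have Mpos : 0 < size (enum (cmask g)) by rewrite -cardE card_gt0.
set u := prefix_word g lam; set w := lasso x0 u (enum (cmask g)).
exists w; split.
  apply/powerset_lang => N; exists (size u + N.+1).
    exact: leq_trans (leqnSn N) (leq_addl _ _).
  by exists (g, inr (inord (N.+1 %% #|cmask g|))); [rewrite inE | exact: reach_cycle].
apply: (parikh_cyclic (e := size u)) Mne _ _ => [m Hm|c Hc].
  rewrite cardE /w lasso_suffix //; apply: set_nth_default.
  exact: ltn_pmod _ Mpos.
by rewrite lin_erase // cnt_mkseq /w mkseq_lasso count_prefix.
Qed.

Theorem aut_parikh v :
  (exists w, lang aut w /\ parikh w v) <-> exists2 t, t \in comps & comp_image t v.
Proof.
split=> [[w [/aut_sound [g [x Hx Hp]] Hv]]|[t Ht [x [lam Hlam] ->]]].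
  by exists (ssval g); [exact: ssvalP | exists x; rewrite // (parikh_uniq Hv Hp)].
have [w [Hw Hp]] := aut_complete (SeqSub Ht) lam.
exists w; split=> //; suff -> : x = lin (SeqSub Ht) lam by [].
by apply/ffunP => a; rewrite Hlam ffunE.
Qed.

End Construction.

Lemma masked_semilinear_components (Sigma : finType) (S : {ffun Sigma -> ninf} -> Prop) :
  masked_semilinear S ->
  exists comps : seq (component Sigma), (forall t, t \in comps -> t.1 != set0) /\
    forall v, S v <-> exists2 t, t \in comps & comp_image t v.
Proof.
move=> [Sm [HSm HS]].
pose desc M (L0 : seq ({ffun Sigma -> nat} * seq {ffun Sigma -> nat})) :=
  M != set0 -> forall x, Sm (maskof M) x <-> exists2 bP, bP \in L0 & linear_set bP.1 bP.2 x.
have Hdesc M : exists L0, desc M L0.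
  case: (boolP (M == set0)) => [/eqP ->|HM]; first by exists [::]; rewrite /desc eqxx.
  have [L0 HL0] : semilinear (Sm (maskof M)) by apply/HSm/is_maskP; exists M.
  by exists L0.
have [L HL] := fin_all_exists Hdesc.
exists [seq (M, bP) | M <- enum [pred M : {set Sigma} | M != set0], bP <- L M]; split.
  by move=> t /allpairsPdep [M [bP [HM _ ->]]]; rewrite mem_enum in HM.
move=> v; split.
  move=> /HS [m [/is_maskP [M HM ->] [x /(HL _ HM) [bP HbP Hx] ->]]].
  exists (M, bP); first by apply/allpairsPdep; exists M, bP; rewrite mem_enum.
  by exists x.
move=> [t /allpairsPdep [M [bP [HM HbP ->]]] [x Hx ->]]; rewrite mem_enum in HM.
apply/HS; exists (maskof M); split; first by apply/is_maskP; exists M.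
by exists x => //; apply/HL => //; exists bP.
Qed.

Theorem lemma3 (Sigma : finType) (S : {ffun Sigma -> ninf} -> Prop) :
  masked_semilinear S ->
  exists A : automaton Sigma, deterministic A /\
    forall v : {ffun Sigma -> ninf}, (exists w, Jclosure A w /\ parikh w v) <-> S v.
Proof.
move=> /masked_semilinear_components [comps [Hmask HS]].
exists (aut comps); split; first exact: powerset_det.
by move=> v; rewrite Jclosure_parikh (aut_parikh Hmask) HS.
Qed.
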